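(* If a Sturmian sequence $\epsilon\in\{H,V\}^{\mathbb{Z}}$ is almost symmetric, then so is its derived sequence $\epsilon'$.
   Context: A Sturmian sequence is a biinfinite sequence over two letters that is not eventually periodic and has exactly $n+1$ distinct subwords of each length $n$; in such a sequence one of the letters is isolated (never occurs twice consecutively). The derived sequence $\epsilon'$ is obtained from $\epsilon$ by deleting one occurrence of the non-isolated letter from each maximal block of consecutive occurrences of it. A sequence $\epsilon$ is almost symmetric if there is $N$ with $\epsilon_{N+k}=\epsilon_{N-k-1}$ for all $k\ge1$ and $\epsilon_N\ne\epsilon_{N-1}$. *)

From Stdlib Require Import ZArith List.
Import ListNotations.
Open Scope Z_scope.

Inductive letter : Type := H | V.

Definition biseq := Z -> letter.

Definition factor (e : biseq) (i : Z) (n : nat) : list letter :=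
  map (fun k : nat => e (i + Z.of_nat k)) (seq 0 n).

Definition has_complexity_succ (e : biseq) (n : nat) : Prop :=
  exists l : list (list letter),
    length l = S n /\ NoDup l /\
    (forall w, In w l <-> exists i, factor e i n = w).

Definition eventually_periodic (e : biseq) : Prop :=
  (exists p N, 0 < p /\ forall i, N <= i -> e (i + p) = e i) \/
  (exists p N, 0 < p /\ forall i, i <= N -> e (i - p) = e i).

Definition sturmian (e : biseq) : Prop :=
  ~ eventually_periodic e /\ forall n : nat, has_complexity_succ e n.

Definition non_isolated (e : biseq) (b : letter) : Prop :=
  exists i, e i = b /\ e (i + 1) = b.

(* Position i is deleted when deriving w.r.t. the non-isolated letter b:
   it is the first occurrence of b in its maximal block of b's. *)
Definition deleted (e : biseq) (b : letter) (i : Z) : Prop :=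
  e i = b /\ e (i - 1) <> b.

(* e' is (an indexing of) the derived sequence of e: the subsequence of e
   consisting of the non-deleted positions, listed in increasing order via a
   strictly increasing enumeration phi whose range is exactly the kept set. *)
Definition derived (e e' : biseq) : Prop :=
  exists b : letter, non_isolated e b /\
  exists phi : Z -> Z,
    (forall m n, m < n -> phi m < phi n) /\
    (forall n, ~ deleted e b (phi n)) /\
    (forall i, ~ deleted e b i -> exists n, phi n = i) /\
    (forall n, e' n = e (phi n)).

Definition almost_symmetric (e : biseq) : Prop :=
  exists N : Z,
    (forall k : Z, 1 <= k -> e (N + k) = e (N - k - 1)) /\ e N <> e (N - 1).

(* In a Sturmian sequence the letter other than the non-isolated letter [b] is isolated.
   Reflecting through an almost-symmetry centre [N] of [e] turns "delete the first [b] of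
   every block" into "delete the last [b] of every block", which leaves the same letters.
   So the map [mirror] sending a kept position [x >= N] to the reflection of [x] (of
   [x - 1] when [e x = b]) is an order-reversing, letter-preserving bijection from the kept
   positions right of the centre onto those left of it; read through the enumeration of
   kept positions it becomes the reflection [n |-> 2 M - 1 - n], an almost-symmetry of the
   derived sequence.  The letter is flipped only at the single kept position in
   [{N, N+1}], which is what almost-symmetry demands at the centre. *)

From Stdlib Require Import ZArith List Lia Classical.
Import ListNotations.
Open Scope Z_scope.

Definition strictly_increasing (f : Z -> Z) : Prop := forall m n, m < n -> f m < f n.

Lemma succ_incr_growth (f : Z -> Z) :
  (forall n, f n < f (n + 1)) -> forall m n, m <= n -> f m + (n - m) <= f n.
Proof.
  intros Hsucc m n Hmn.
  replace n with (m + (n - m)) at 2 by lia.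
  pattern (n - m); apply natlike_ind; [rewrite !Z.add_0_r; lia | | lia].
  intros d _ IH.
  specialize (Hsucc (m + d)).
  replace (m + Z.succ d) with (m + d + 1) by lia.
  lia.
Qed.

Lemma strictly_increasing_succ (f : Z -> Z) :
  (forall n, f n < f (n + 1)) -> strictly_increasing f.
Proof.
  intros Hsucc m n Hmn.
  pose proof (succ_incr_growth f Hsucc (m + 1) n ltac:(lia)).
  specialize (Hsucc m).
  lia.
Qed.

Section StrictlyIncreasing.

Variable f : Z -> Z.
Hypothesis f_incr : strictly_increasing f.

Lemma incr_lt_iff m n : f m < f n <-> m < n.
Proof.
  split; [|apply f_incr].
  intros Hlt.
  destruct (Z.lt_trichotomy m n) as [|[<-|Hnm]]; [easy|lia|].
  apply f_incr in Hnm.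
  lia.
Qed.

Lemma incr_le_iff m n : f m <= f n <-> m <= n.
Proof. rewrite !Z.le_ngt, incr_lt_iff. reflexivity. Qed.

Lemma incr_crossing N : exists M, f (M - 1) < N <= f M.
Proof.
  pose proof (succ_incr_growth f (fun n => f_incr n (n + 1) (Z.lt_succ_diag_r n)))
    as Hgrow.
  set (d := Z.abs (N - f 0)).
  assert (Hup : N <= f d) by (pose proof (Hgrow 0 d); lia).
  assert (Hlow : f (- d - 1) < N) by (pose proof (Hgrow (- d - 1) 0); lia).
  assert (Hdescent : forall (k : nat) M, f (M - Z.of_nat k) < N <= f M ->
                     exists M', f (M' - 1) < N <= f M').
  { induction k as [|k IH]; intros M [Hl Hu].
    { simpl in Hl; rewrite Z.sub_0_r in Hl; lia. }
    destruct (Z_lt_le_dec (f (M - 1)) N) as [Hl'|Hu']; [now exists M|].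
    apply (IH (M - 1)).
    replace (M - 1 - Z.of_nat k) with (M - Z.of_nat (S k)) by lia.
    auto. }
  apply (Hdescent (Z.to_nat (2 * d + 1)) d).
  replace (d - Z.of_nat (Z.to_nat (2 * d + 1))) with (- d - 1) by lia.
  auto.
Qed.

End StrictlyIncreasing.

Lemma decreasing_same_range_eq (f g : nat -> Z) :
  (forall i j, (i < j)%nat -> f j < f i) ->
  (forall i j, (i < j)%nat -> g j < g i) ->
  (forall i, exists j, f i = g j) ->
  (forall j, exists i, g j = f i) ->
  forall i, f i = g i.
Proof.
  intros Hf Hg Hfg Hgf i.
  induction i as [i IH] using lt_wf_ind.
  destruct (Hfg i) as [j Hj].
  destruct (Nat.lt_trichotomy j i) as [Hji|[<-|Hij]]; [exfalso | exact Hj | exfalso].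
  - rewrite <- (IH j Hji) in Hj.
    specialize (Hf j i Hji).
    lia.
  - destruct (Hgf i) as [l Hl].
    destruct (Nat.lt_ge_cases l i) as [Hli|Hil].
    + rewrite (IH l Hli) in Hl.
      specialize (Hg l i Hli).
      lia.
    + assert (Hfl : f l <= f i)
        by (destruct (Nat.eq_dec l i) as [->|]; [lia | specialize (Hf i l ltac:(lia)); lia]).
      specialize (Hg i j Hij).
      lia.
Qed.

Section Enumeration.

Variable K : Z -> Prop.
Hypothesis K_dec : forall x, {K x} + {~ K x}.
Hypothesis K_dense : forall x, K x \/ K (x + 1).

Definition next_in x := if K_dec (x + 1) then x + 1 else x + 2.
Definition prev_in x := if K_dec (x - 1) then x - 1 else x - 2.
Definition start_in := if K_dec 0 then 0 else 1.

Definition enum_in n :=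
  if Z_lt_dec n 0 then Nat.iter (Z.to_nat (- n)) prev_in start_in
  else Nat.iter (Z.to_nat n) next_in start_in.

Lemma next_in_K x : K (next_in x).
Proof.
  unfold next_in; destruct (K_dec (x + 1)) as [|Hx1]; [easy|].
  destruct (K_dense (x + 1)) as [|Hx2]; [contradiction|].
  now replace (x + 2) with (x + 1 + 1) by lia.
Qed.

Lemma prev_in_K x : K (prev_in x).
Proof.
  unfold prev_in; destruct (K_dec (x - 1)) as [|Hx1]; [easy|].
  destruct (K_dense (x - 2)) as [|Hx2]; [easy|].
  now replace (x - 2 + 1) with (x - 1) in Hx2 by lia.
Qed.

Lemma iter_in_K (g : Z -> Z) k : (forall x, K (g x)) -> K (Nat.iter k g start_in).
Proof.
  intros Hg; destruct k; simpl; [|apply Hg].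
  unfold start_in; destruct (K_dec 0); [easy|].
  destruct (K_dense 0); easy.
Qed.

Lemma next_in_prev_in x : K x -> next_in (prev_in x) = x.
Proof.
  intros Hx; unfold prev_in, next_in.
  destruct (K_dec (x - 1)) as [Hx1|Hx1].
  - replace (x - 1 + 1) with x by lia.
    destruct (K_dec x); [lia | contradiction].
  - replace (x - 2 + 1) with (x - 1) by lia.
    destruct (K_dec (x - 1)); [contradiction | lia].
Qed.

Lemma next_in_gap x z : x < z < next_in x -> ~ K z.
Proof.
  unfold next_in; destruct (K_dec (x + 1)) as [|Hx1]; [lia|].
  intros Hz.
  now replace z with (x + 1) by lia.
Qed.

Lemma enum_in_K n : K (enum_in n).
Proof.
  unfold enum_in; destruct (Z_lt_dec n 0);
    apply iter_in_K; [apply prev_in_K | apply next_in_K].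
Qed.

Lemma enum_in_succ n : enum_in (n + 1) = next_in (enum_in n).
Proof.
  unfold enum_in.
  destruct (Z_lt_dec n 0), (Z_lt_dec (n + 1) 0); try lia.
  - replace (Z.to_nat (- n)) with (S (Z.to_nat (- (n + 1)))) by lia; simpl.
    symmetry; apply next_in_prev_in, iter_in_K, prev_in_K.
  - replace n with (-1) by lia; simpl.
    symmetry; apply next_in_prev_in, (iter_in_K next_in 0), next_in_K.
  - now replace (Z.to_nat (n + 1)) with (S (Z.to_nat n)) by lia.
Qed.

Lemma enum_in_incr : strictly_increasing enum_in.
Proof.
  apply strictly_increasing_succ; intros n.
  rewrite enum_in_succ; unfold next_in; destruct K_dec; lia.
Qed.

Lemma enum_in_onto x : K x -> exists n, enum_in n = x.
Proof.
  intros Hx.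
  destruct (incr_crossing enum_in enum_in_incr (x + 1)) as [M [Hlo Hhi]].
  exists (M - 1).
  destruct (Z.eq_dec (enum_in (M - 1)) x) as [|Hne]; [easy | exfalso].
  apply (next_in_gap (enum_in (M - 1)) x); [|easy].
  rewrite <- enum_in_succ.
  replace (M - 1 + 1) with M by lia.
  lia.
Qed.

Lemma enumeration_exists :
  exists phi, strictly_increasing phi /\ (forall n, K (phi n)) /\
              (forall x, K x -> exists n, phi n = x).
Proof. exists enum_in; auto using enum_in_incr, enum_in_K, enum_in_onto. Qed.

End Enumeration.

Lemma letter_dec (x y : letter) : {x = y} + {x <> y}.
Proof. decide equality. Defined.

Lemma letter_eq_of_neq (x y z : letter) : x <> z -> y <> z -> x = y.
Proof. destruct x, y, z; congruence. Qed.

Lemma factor_two (e : biseq) i : factor e i 2 = [e i; e (i + 1)].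
Proof. unfold factor; simpl; now rewrite Z.add_0_r. Qed.

Lemma eventually_periodic_of_closed (e : biseq) c j :
  e j = c -> (forall i, e i = c -> e (i + 1) = c) -> eventually_periodic e.
Proof.
  intros Hj Hclosed.
  assert (Hconst : forall d, 0 <= d -> e (j + d) = c).
  { apply natlike_ind; [now rewrite Z.add_0_r|].
    intros d _ IH.
    replace (j + Z.succ d) with (j + d + 1) by lia.
    auto. }
  left; exists 1, j; split; [lia|].
  intros i Hi.
  replace i with (j + (i - j)) by lia.
  replace (j + (i - j) + 1) with (j + (i - j + 1)) by lia.
  rewrite !Hconst by lia.
  reflexivity.
Qed.

Lemma sturmian_non_isolated (e : biseq) : sturmian e -> exists b, non_isolated e b.
Proof.
  intros [Hnp _]; apply NNPP; intros Hn; apply Hnp.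
  assert (Halt : forall k, e (k + 1) <> e k)
    by (intros k Hk; apply Hn; exists (e k), k; auto).
  left; exists 2, 0; split; [lia|]; intros i _.
  apply (letter_eq_of_neq _ _ (e (i + 1))).
  - replace (i + 2) with (i + 1 + 1) by lia; apply Halt.
  - apply not_eq_sym, Halt.
Qed.

(* Two letters occurring doubled, plus both transitions (without which [e] would be
   eventually constant), would give four factors of length 2. *)
Lemma sturmian_isolated (e : biseq) b :
  sturmian e -> non_isolated e b -> forall i, e i <> b -> e (i + 1) = b.
Proof.
  intros [Hnp Hcx] [j [Hj Hj1]] i Hi; apply NNPP; intros Hi1.
  assert (Hii : e (i + 1) = e i) by (apply (letter_eq_of_neq _ _ b); auto).
  assert (Hbc : exists p, e p = b /\ e (p + 1) = e i).
  { apply NNPP; intros Hn; apply Hnp, (eventually_periodic_of_closed e b j Hj).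
    intros p Hp; apply NNPP; intros Hp1; apply Hn.
    exists p; split; [easy | now apply (letter_eq_of_neq _ _ b)]. }
  assert (Hcb : exists q, e q = e i /\ e (q + 1) = b).
  { apply NNPP; intros Hn; apply Hnp, (eventually_periodic_of_closed e (e i) i eq_refl).
    intros q Hq; apply NNPP; intros Hq1; apply Hn.
    exists q; split; [easy | now apply (letter_eq_of_neq _ _ (e i)), not_eq_sym]. }
  destruct Hbc as [p [Hp Hp1]], Hcb as [q [Hq Hq1]].
  destruct (Hcx 2%nat) as [l [Hlen [_ Hl]]].
  assert (Hfour : NoDup [[b; b]; [e i; e i]; [b; e i]; [e i; b]])
    by (repeat constructor; simpl; intuition congruence).
  assert (Hincl : incl [[b; b]; [e i; e i]; [b; e i]; [e i; b]] l).
  { intros w Hw; apply Hl; simpl in Hw.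
    destruct Hw as [<-|[<-|[<-|[<-|[]]]]];
      [exists j | exists i | exists p | exists q]; rewrite factor_two; congruence. }
  pose proof (NoDup_incl_length Hfour Hincl).
  simpl in *; lia.
Qed.

Lemma not_deleted_iff (e : biseq) b x : ~ deleted e b x <-> e x <> b \/ e (x - 1) = b.
Proof.
  unfold deleted.
  destruct (letter_dec (e x) b), (letter_dec (e (x - 1)) b); tauto.
Qed.

Lemma kept_dec (e : biseq) b x : {~ deleted e b x} + {~ ~ deleted e b x}.
Proof.
  unfold deleted.
  destruct (letter_dec (e x) b), (letter_dec (e (x - 1)) b); [left | right | left | left];
    tauto.
Qed.

Lemma kept_dense (e : biseq) b x : ~ deleted e b x \/ ~ deleted e b (x + 1).
Proof.
  unfold deleted; replace (x + 1 - 1) with x by lia.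
  destruct (letter_dec (e x) b); tauto.
Qed.

Lemma derived_exists (e : biseq) b : non_isolated e b -> exists e', derived e e'.
Proof.
  intros Hb.
  destruct (enumeration_exists _ (kept_dec e b) (kept_dense e b)) as [phi [Hphi [Hk Hon]]].
  exists (fun n => e (phi n)), b; split; [exact Hb|].
  exists phi; auto.
Qed.

Section Mirror.

Variables (e : biseq) (b : letter) (N : Z).
Hypothesis other_isolated : forall i, e i <> b -> e (i + 1) = b.
Hypothesis e_sym : forall k, 1 <= k -> e (N + k) = e (N - k - 1).
Hypothesis e_center : e N <> e (N - 1).

Local Notation kept x := (~ deleted e b x).

Lemma e_reflect x : N + 1 <= x -> e (2 * N - 1 - x) = e x.
Proof.
  intros Hx; pose proof (e_sym (x - N) ltac:(lia)) as Hk.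
  replace (N + (x - N)) with x in Hk by lia.
  replace (N - (x - N) - 1) with (2 * N - 1 - x) in Hk by lia.
  auto.
Qed.

Lemma e_reflect_left z : z <= N - 2 -> e (2 * N - 1 - z) = e z.
Proof.
  intros Hz; rewrite <- (e_reflect (2 * N - 1 - z)) by lia.
  f_equal; lia.
Qed.

Lemma e_right_of_center : e (N + 1) = b.
Proof.
  destruct (letter_dec (e N) b) as [HN|HN]; [|exact (other_isolated N HN)].
  rewrite <- e_reflect by lia.
  replace (2 * N - 1 - (N + 1)) with (N - 2) by lia.
  destruct (letter_dec (e (N - 2)) b) as [|H2]; [easy|].
  apply other_isolated in H2; replace (N - 2 + 1) with (N - 1) in H2 by lia.
  congruence.
Qed.

Lemma e_left_of_center : e (N - 2) = b.
Proof.
  rewrite <- e_right_of_center, <- e_reflect_left by lia.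
  f_equal; lia.
Qed.

Definition mirror x := if letter_dec (e x) b then 2 * N - x else 2 * N - 1 - x.

Lemma kept_center : exists c, N <= c <= N + 1 /\ kept c.
Proof.
  destruct (letter_dec (e N) b) as [HN|HN].
  - exists (N + 1); split; [lia|].
    rewrite not_deleted_iff; right; now replace (N + 1 - 1) with N by lia.
  - exists N; split; [lia|].
    rewrite not_deleted_iff; now left.
Qed.

Lemma mirror_center x :
  kept x -> N <= x <= N + 1 -> mirror x = N - 1 /\ e (N - 1) <> e x.
Proof.
  rewrite not_deleted_iff; intros Kx Hx; unfold mirror.
  destruct (Z.eq_dec x N) as [->|HxN].
  - destruct (letter_dec (e N) b) as [HN|HN].
    + destruct Kx; congruence.
    + split; [lia | now apply not_eq_sym].
  - replace x with (N + 1) in * by lia.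
    rewrite e_right_of_center in *; replace (N + 1 - 1) with N in Kx by lia.
    destruct (letter_dec b b); [|easy].
    split; [lia|].
    destruct Kx; congruence.
Qed.

Lemma mirror_far x :
  kept x -> N + 2 <= x -> mirror x <= N - 2 /\ kept (mirror x) /\ e (mirror x) = e x.
Proof.
  rewrite not_deleted_iff; intros Kx Hx; unfold mirror.
  destruct (letter_dec (e x) b) as [Hb|Hb].
  - destruct Kx as [|Kx]; [easy|].
    assert (Hm : e (2 * N - x) = b).
    { rewrite <- Kx, <- (e_reflect (x - 1)) by lia.
      f_equal; lia. }
    split; [lia|]; split; [|congruence].
    rewrite not_deleted_iff; right.
    replace (2 * N - x - 1) with (2 * N - 1 - x) by lia.
    rewrite e_reflect by lia; easy.
  - rewrite e_reflect by lia.
    split; [lia|]; split; [|easy].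
    rewrite not_deleted_iff, e_reflect by lia; now left.
Qed.

Lemma mirror_kept_lt x : kept x -> N <= x -> mirror x < N /\ kept (mirror x).
Proof.
  intros Kx Hx.
  destruct (Z_le_gt_dec x (N + 1)).
  - destruct (mirror_center x Kx ltac:(lia)) as [-> _]; split; [lia|].
    rewrite not_deleted_iff; right.
    replace (N - 1 - 1) with (N - 2) by lia; apply e_left_of_center.
  - destruct (mirror_far x Kx ltac:(lia)) as [Hlt [Hk _]]; split; [lia | easy].
Qed.

(* A kept [y] with [e y = b] has [e (y - 1) = b], so it never directly follows an [x]
   with [e x <> b]; this is the one case where the shifts of [mirror] could collide. *)
Lemma mirror_decreasing x y : kept x -> kept y -> x < y -> mirror y < mirror x.
Proof.
  rewrite !not_deleted_iff; intros Kx Ky Hxy; unfold mirror.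
  destruct (letter_dec (e x) b), (letter_dec (e y) b); try lia.
  destruct Ky as [|Ky]; [easy|].
  destruct (Z.eq_dec y (x + 1)) as [->|]; [|lia].
  replace (x + 1 - 1) with x in Ky by lia.
  easy.
Qed.

Lemma mirror_onto z : kept z -> z < N -> exists x, kept x /\ N <= x /\ mirror x = z.
Proof.
  intros Kz Hz.
  destruct (Z.eq_dec z (N - 1)) as [->|Hz1].
  { destruct kept_center as [c [Hc Kc]].
    exists c; split; [easy|]; split; [lia|].
    apply (mirror_center c Kc Hc). }
  rewrite not_deleted_iff in Kz; unfold mirror.
  destruct (letter_dec (e z) b) as [Hb|Hb].
  - destruct Kz as [|Kz]; [easy|].
    assert (Hx : e (2 * N - z) = b).
    { rewrite <- Kz, <- (e_reflect_left (z - 1)) by lia; f_equal; lia. }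
    exists (2 * N - z); rewrite not_deleted_iff, Hx.
    destruct (letter_dec b b); [|easy].
    split; [right | split; lia].
    replace (2 * N - z - 1) with (2 * N - 1 - z) by lia.
    rewrite e_reflect_left by lia; easy.
  - exists (2 * N - 1 - z); rewrite not_deleted_iff, e_reflect_left by lia.
    destruct (letter_dec (e z) b); [easy|].
    split; [now left | split; lia].
Qed.

Lemma kept_center_gap x y : kept x -> kept y -> N <= x < y -> N + 2 <= y.
Proof.
  intros Kx Ky Hxy.
  destruct (Z_le_gt_dec (N + 2) y); [easy | exfalso].
  destruct (mirror_center x Kx ltac:(lia)) as [Hmx _].
  destruct (mirror_center y Ky ltac:(lia)) as [Hmy _].
  pose proof (mirror_decreasing x y Kx Ky ltac:(lia)).
  lia.
Qed.

Variables (e' : biseq) (phi : Z -> Z).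
Hypothesis phi_incr : strictly_increasing phi.
Hypothesis phi_kept : forall n, kept (phi n).
Hypothesis phi_onto : forall x, kept x -> exists n, phi n = x.
Hypothesis e'_phi : forall n, e' n = e (phi n).

Lemma mirror_enum M :
  phi (M - 1) < N <= phi M ->
  forall j : nat, mirror (phi (M + Z.of_nat j)) = phi (M - 1 - Z.of_nat j).
Proof.
  intros [HMlo HMhi].
  apply decreasing_same_range_eq.
  - intros i j Hij; apply mirror_decreasing; auto; apply phi_incr; lia.
  - intros i j Hij; apply phi_incr; lia.
  - intros i.
    assert (Hi : phi M <= phi (M + Z.of_nat i)) by (apply incr_le_iff; auto; lia).
    destruct (mirror_kept_lt _ (phi_kept (M + Z.of_nat i)) ltac:(lia)) as [Hlt Hk].
    destruct (phi_onto _ Hk) as [n Hn].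
    assert (Hn' : n < M) by (apply (incr_lt_iff phi); auto; lia).
    exists (Z.to_nat (M - 1 - n)); rewrite <- Hn; f_equal; lia.
  - intros j.
    assert (Hj : phi (M - 1 - Z.of_nat j) <= phi (M - 1)) by (apply incr_le_iff; auto; lia).
    destruct (mirror_onto _ (phi_kept (M - 1 - Z.of_nat j)) ltac:(lia)) as [x [Kx [Hx Hmx]]].
    destruct (phi_onto _ Kx) as [n <-].
    assert (Hn : M <= n) by (enough (M - 1 < n) by lia; apply (incr_lt_iff phi); auto; lia).
    exists (Z.to_nat (n - M)); rewrite <- Hmx; do 2 f_equal; lia.
Qed.

Lemma almost_symmetric_derived : almost_symmetric e'.
Proof.
  destruct (incr_crossing phi phi_incr N) as [M HM].
  pose proof (mirror_enum M HM) as Hmir.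
  assert (Hnear : phi M <= N + 1).
  { destruct kept_center as [c [Hc Kc]].
    destruct (phi_onto c Kc) as [n <-].
    assert (Hn : M <= n)
      by (enough (M - 1 < n) by lia; apply (incr_lt_iff phi); auto; lia).
    apply (incr_le_iff phi phi_incr) in Hn.
    lia. }
  exists M; split.
  - intros k Hk; rewrite !e'_phi.
    specialize (Hmir (Z.to_nat k)); rewrite Z2Nat.id in Hmir by lia.
    replace (M - k - 1) with (M - 1 - k) by lia; rewrite <- Hmir.
    assert (Hfar : N + 2 <= phi (M + k))
      by (apply (kept_center_gap (phi M)); auto; split; [lia | apply phi_incr; lia]).
    symmetry; apply (mirror_far _ (phi_kept _) Hfar).
  - rewrite !e'_phi.
    specialize (Hmir 0%nat); rewrite Z.add_0_r, Z.sub_0_r in Hmir; rewrite <- Hmir.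
    destruct (mirror_center (phi M) (phi_kept M) ltac:(lia)) as [-> Hne].
    now apply not_eq_sym.
Qed.

End Mirror.

Theorem lemma4p2 (e : biseq) :
  sturmian e -> almost_symmetric e ->
  (exists e' : biseq, derived e e') /\
  (forall e' : biseq, derived e e' -> almost_symmetric e').
Proof.
  intros Hst [N [Hsym Hcenter]]; split.
  - destruct (sturmian_non_isolated e Hst) as [b Hb].
    exact (derived_exists e b Hb).
  - intros e' [b [Hb [phi [Hincr [Hkept [Honto He']]]]]].
    exact (almost_symmetric_derived e b N (sturmian_isolated e b Hst Hb) Hsym Hcenter
             e' phi Hincr Hkept Honto He').
Qed.
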